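(* Let $M$ be a non-reduced $n\times n$ matrix with natural number entries. Then there is a reduced submatrix $N$ of $M$ such that $\mathrm{Cat}(M)\neq\emptyset$ if and only if $\mathrm{Cat}(N)\neq\emptyset$.
   Context: For an $n\times n$ matrix $M=(m_{ij})$ with entries in the natural numbers, $\mathrm{Cat}(M)$ denotes the collection of categories $A$ with exactly $n$ distinct objects $x_1,\dots,x_n$ such that $|A(x_i,x_j)|=m_{ij}$ for all $i,j$, where $A(x_i,x_j)$ is the set of morphisms from $x_i$ to $x_j$. A matrix $M$ is called non-reduced if there exist $i\neq j$ such that $M_{ki}=M_{kj}$ and $M_{ik}=M_{jk}$ for all $k$ (i.e. row $i$ equals row $j$ and column $i$ equals column $j$); it is called reduced otherwise. A submatrix of $M$ means the matrix obtained by keeping the same subset of indices for rows and for columns, i.e. $(M_{st})_{s,t\in S}$ for some subset $S\subseteq\{1,\dots,n\}$. *)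

From mathcomp Require Import all_boot matrix.
Set Implicit Arguments. Unset Strict Implicit. Unset Printing Implicit Defensive.

(* A category with objects x_1..x_n (indexed by 'I_n, hence distinct) whose
   hom-set A(x_i,x_j) has exactly M i j elements.  Up to isomorphism we may take
   A(x_i,x_j) to be the canonical finite set 'I_(M i j). *)
Definition is_cat (n : nat) (M : 'M[nat]_n)
  (comp : forall i j k : 'I_n, 'I_(M i j) -> 'I_(M j k) -> 'I_(M i k))
  (idm : forall i : 'I_n, 'I_(M i i)) : Prop :=
  [/\ (forall (i j k l : 'I_n) (f : 'I_(M i j)) (g : 'I_(M j k)) (h : 'I_(M k l)),
          comp i k l (comp i j k f g) h = comp i j l f (comp j k l g h)),
      (forall (i j : 'I_n) (f : 'I_(M i j)), comp i i j (idm i) f = f) &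
      (forall (i j : 'I_n) (f : 'I_(M i j)), comp i j j f (idm j) = f)].

Definition Cat_nonempty (n : nat) (M : 'M[nat]_n) : Prop :=
  exists comp idm, @is_cat n M comp idm.

Definition non_reduced (n : nat) (M : 'M[nat]_n) : Prop :=
  exists i j : 'I_n, i != j /\ (forall k : 'I_n, M k i = M k j /\ M i k = M j k).

Definition reduced (n : nat) (M : 'M[nat]_n) : Prop := ~ non_reduced M.

Definition principal_submx (n : nat) (M : 'M[nat]_n) (S : {set 'I_n}) : 'M[nat]_#|S| :=
  \matrix_(a < #|S|, b < #|S|) M (enum_val a) (enum_val b).

From mathcomp Require Import all_boot matrix.
Set Implicit Arguments. Unset Strict Implicit. Unset Printing Implicit Defensive.

(* Indices with equal rows and equal columns ("twins") form an equivalence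
   relation; keeping one representative per class yields a reduced principal
   submatrix N. Categories transfer both ways: restricting to the kept objects
   gives a category for N, and conversely a category for N pulls back along the
   map sending each index to its representative, every object of M becoming a
   copy of its representative. *)

Lemma cast_ord_inv (p q : nat) (e1 : q = p) (e2 : p = q) (i : 'I_p) :
  cast_ord e1 (cast_ord e2 i) = i.
Proof. exact: val_inj. Qed.

Lemma Cat_nonempty_pullback (n m : nat) (M : 'M[nat]_n) (N : 'M[nat]_m)
    (f : 'I_m -> 'I_n) :
  (forall a b, N a b = M (f a) (f b)) -> Cat_nonempty M -> Cat_nonempty N.
Proof.
move=> eN [comp [idm [compA comp1m compm1]]].
exists (fun a b c x y => cast_ord (esym (eN a c))
  (comp (f a) (f b) (f c) (cast_ord (eN a b) x) (cast_ord (eN b c) y))).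
exists (fun a => cast_ord (esym (eN a a)) (idm (f a))).
split=> [i j k l x y z | i j x | i j x]; rewrite !cast_ord_inv.
- by rewrite compA.
- by rewrite comp1m cast_ord_inv.
- by rewrite compm1 cast_ord_inv.
Qed.

Lemma Cat_nonempty_principal_submx (n : nat) (M : 'M[nat]_n) (S : {set 'I_n}) :
  Cat_nonempty M -> Cat_nonempty (principal_submx M S).
Proof. by apply: (Cat_nonempty_pullback (f := enum_val)) => a b; rewrite mxE. Qed.

Section Twins.

Variables (n : nat) (M : 'M[nat]_n).

Definition twins (k l : 'I_n) : bool :=
  [forall t, (M t k == M t l) && (M k t == M l t)].

Lemma twinsP k l :
  reflect (forall t, M t k = M t l /\ M k t = M l t) (twins k l).
Proof.
apply: (iffP forallP) => [H t | H t].
- by have /andP[/eqP -> /eqP ->] := H t.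
- by have [-> ->] := H t; rewrite !eqxx.
Qed.

Lemma twins_refl k : twins k k.
Proof. exact/twinsP. Qed.

Lemma twins_sym k l : twins k l -> twins l k.
Proof. by move/twinsP => H; apply/twinsP => t; have [-> ->] := H t. Qed.

Lemma twins_trans k l p : twins k l -> twins l p -> twins k p.
Proof.
move=> /twinsP H1 /twinsP H2; apply/twinsP => t.
by have [-> ->] := H1 t; exact: H2.
Qed.

Definition rep (k : 'I_n) : 'I_n := [arg min_(l < k | twins k l) (l : nat)].

Lemma rep_spec k : twins k (rep k) /\ forall l, twins k l -> rep k <= l.
Proof. by rewrite /rep; case: arg_minnP; first exact: twins_refl. Qed.

Lemma rep_twins k l : twins k l -> rep k = rep l.
Proof.
move=> kl; have [kk minK] := rep_spec k; have [ll minL] := rep_spec l.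
apply/val_inj/eqP; rewrite eqn_leq minK ?minL //.
  exact: twins_trans (twins_sym kl) kk.
exact: twins_trans kl ll.
Qed.

Lemma repK k : rep (rep k) = rep k.
Proof. by rewrite -(rep_twins (proj1 (rep_spec k))). Qed.

Lemma rep_entry k l : M (rep k) (rep l) = M k l.
Proof.
have /twinsP/(_ (rep k))[<- _] := proj1 (rep_spec l).
by have /twinsP/(_ l)[_ <-] := proj1 (rep_spec k).
Qed.

Definition reps : {set 'I_n} := [set k | rep k == k].

Lemma rep_in_reps k : rep k \in reps.
Proof. by rewrite inE repK. Qed.

Lemma rep_enum_val (a : 'I_#|reps|) : rep (enum_val a) = enum_val a.
Proof. by apply/eqP; have := enum_valP a; rewrite inE. Qed.

Definition rep_rank (k : 'I_n) : 'I_#|reps| := enum_rank_in (rep_in_reps k) (rep k).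

Lemma enum_val_rep_rank k : enum_val (rep_rank k) = rep k.
Proof. exact: enum_rankK_in (rep_in_reps k). Qed.

Lemma reduced_principal_submx_reps : reduced (principal_submx M reps).
Proof.
move=> [a [b [neq_ab twins_ab]]]; case/negP: neq_ab.
(* Every index of M has the same row and column entries as its representative,
   which is an index of the submatrix. *)
have twins_enum : twins (enum_val a) (enum_val b).
  apply/twinsP => t; have [col row] := twins_ab (rep_rank t).
  rewrite !mxE enum_val_rep_rank in col row.
  by rewrite -!(rep_entry t) -!(rep_entry _ t) !rep_enum_val col row.
by have := rep_twins twins_enum; rewrite !rep_enum_val => /enum_val_inj ->.
Qed.

Lemma Cat_nonempty_principal_submx_reps :
  Cat_nonempty M <-> Cat_nonempty (principal_submx M reps).
Proof.
split; first exact: Cat_nonempty_principal_submx.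
apply: (Cat_nonempty_pullback (f := rep_rank)) => k l.
by rewrite mxE !enum_val_rep_rank rep_entry.
Qed.

End Twins.

Theorem mainTheorem7 (n : nat) (M : 'M[nat]_n) :
  non_reduced M ->
  exists S : {set 'I_n}, reduced (principal_submx M S) /\ (Cat_nonempty M <-> Cat_nonempty (principal_submx M S)).
Proof.
move=> _; exists (reps M).
by split; [exact: reduced_principal_submx_reps | exact: Cat_nonempty_principal_submx_reps].
Qed.
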